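(* Let $q\in\mathbb{N}\setminus\{1\}$ and let $X$ be the geometric armadillo tail with parameter $r=\frac1q$. Then there exists a saddle connection, called $\mathrm{bsc}_2'$, namely the straight-line trajectory of slope $\frac{q}{2q-1}$ starting at the singular point $(1+\frac1q,0)$ (the lower right vertex of $\square_2$): this trajectory reaches the singularity again after finite length without passing through it in between.
   Context: Set $l_k=q^{-(k-1)}$, $s_k=l_1+\dots+l_k$ ($s_0=0$), and $\square_k=[s_{k-1},s_k]\times[0,l_k]\subset\mathbb{R}^2$. The geometric armadillo tail with parameter $\frac1q$ is obtained from $P=\bigcup_k\square_k$ by gluing the top edge of each $\square_k$ to its bottom edge by vertical translation, and for each $k\ge1$ gluing $\{s_k\}\times[l_{k+1},l_k]$ by horizontal translation to $\{0\}\times[l_{k+1},l_k]$; then taking the metric completion, in which all vertices of $P$ become a single wild singularity. Trajectories and slopes are computed in the polygonal representation $P$ with these gluings. A saddle connection is a closed straight-line segment from the singularity to itself with no singular point in its interior. *)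

From Stdlib Require Import Reals Lra.
Open Scope R_scope.

(* Geometric armadillo tail with parameter 1/q, polygonal representation P.
   Squares are indexed by k >= 1 (index 0 is never used). *)

Definition arm_l (q : nat) (k : nat) : R := (/ INR q) ^ (k - 1).

Fixpoint arm_s (q : nat) (k : nat) : R :=
  match k with
  | O => 0
  | S k' => arm_s q k' + arm_l q (S k')
  end.

Definition pt := (R * R)%type.

(* The (topological) interior of P = \bigcup_{k>=1} [s_{k-1},s_k] x [0,l_k],
   written out: open squares, plus the open shared vertical edges
   {s_k} x (0, l_{k+1}) between consecutive squares. *)
Definition arm_interior (q : nat) (p : pt) : Prop :=
  (exists k, (1 <= k)%nat /\ arm_s q (k - 1) < fst p < arm_s q k
             /\ 0 < snd p < arm_l q k)
  \/ (exists k, (1 <= k)%nat /\ fst p = arm_s q k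
             /\ 0 < snd p < arm_l q (S k)).

(* The vertices of P (all of them become the single singular point). *)
Definition arm_vertex (q : nat) (p : pt) : Prop :=
  p = (0, 0) \/ p = (0, 1)
  \/ (exists k, (1 <= k)%nat /\
       (p = (arm_s q k, 0) \/ p = (arm_s q k, arm_l q k)
        \/ p = (arm_s q k, arm_l q (S k)))).

(* Edge gluings (on open edges, i.e. at non-singular points):
   top edge of square k glued to its bottom edge by vertical translation,
   and {s_k} x (l_{k+1}, l_k) glued to {0} x (l_{k+1}, l_k) horizontally.
   [arm_glued q p p'] : boundary point p is identified with boundary point p'. *)
Definition arm_glued_dir (q : nat) (p p' : pt) : Prop :=
  (exists k, (1 <= k)%nat /\ arm_s q (k - 1) < fst p < arm_s q k
             /\ snd p = arm_l q k /\ p' = (fst p, 0))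
  \/ (exists k, (1 <= k)%nat /\ fst p = arm_s q k
             /\ arm_l q (S k) < snd p < arm_l q k /\ p' = (0, snd p)).

Definition arm_glued (q : nat) (p p' : pt) : Prop :=
  arm_glued_dir q p p' \/ arm_glued_dir q p' p.

Definition pt_add (p : pt) (c : R) (v : pt) : pt :=
  (fst p + c * fst v, snd p + c * snd v).

(* A saddle connection in direction v starting at the singular point p0,
   given as a straight-line trajectory in P with the gluings: finitely many
   pieces i = 0..n, piece i starts at a i and has (parameter) length t i > 0;
   its relative interior lies in the interior of P (no singular point, no edge
   crossing needing a gluing); its endpoint is glued to the start of the next
   piece (at a non-singular point), and the endpoint of the last piece is a
   vertex, i.e. the singularity. *)
Definition arm_saddle_connection_from (q : nat) (p0 v : pt) : Prop :=
  arm_vertex q p0 /\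
  exists (n : nat) (a : nat -> pt) (t : nat -> R),
    a 0%nat = p0 /\
    (forall i, (i <= n)%nat -> 0 < t i /\
        forall c, 0 < c < t i -> arm_interior q (pt_add (a i) c v)) /\
    (forall i, (i < n)%nat -> arm_glued q (pt_add (a i) (t i) v) (a (S i))) /\
    arm_vertex q (pt_add (a n) (t n) v).

(* The saddle connection is written down explicitly.  After a first piece
   through square 3 it leaves the right edge of square 3 at height 1/(q(2q-1))
   and re-enters square 1 from the left.  Each round M = 1, ..., q-1 then
   consists of four pieces: across square 1 to its right edge, up to its top,
   from its bottom across into square 2 up to the top of square 2 (ending at
   abscissa 1 + (q-1-M)/q^2), and through square 2 to its right edge, which it
   meets at height (M+1)/(q(2q-1)), exactly one step higher than the height at
   which the round started.  All hitting points are interior points of glued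
   edges until round q-1, whose third piece ends at the vertex (s_1, l_2). *)

From Stdlib Require Import Reals Lra Lia.
Open Scope R_scope.

Lemma arm_l_succ_le q k : (1 <= q)%nat -> arm_l q (S k) <= arm_l q k.
Proof.
  intros hq; unfold arm_l.
  assert (hQ : 1 <= INR q) by (apply (le_INR 1); exact hq).
  assert (hu : 0 < / INR q <= 1).
  { split; [apply Rinv_0_lt_compat; lra|].
    rewrite <- Rinv_1; apply Rinv_le_contravar; lra. }
  destruct k as [|k]; simpl; [lra|].
  rewrite Nat.sub_0_r.
  pose proof (pow_lt (/ INR q) k (proj1 hu)). nra.
Qed.

Lemma arm_interior_segment_in_square q k a t v :
  (1 <= k)%nat -> 0 < fst v -> 0 < snd v ->
  arm_s q (k - 1) <= fst a -> fst (pt_add a t v) <= arm_s q k ->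
  0 <= snd a -> snd (pt_add a t v) <= arm_l q k ->
  forall c, 0 < c < t -> arm_interior q (pt_add a c v).
Proof.
  unfold pt_add; cbn [fst snd]; intros hk hx hy hx0 hx1 hy0 hy1 c hc.
  assert (hxc : 0 < c * fst v < t * fst v) by (split; nra).
  assert (hyc : 0 < c * snd v < t * snd v) by (split; nra).
  left; exists k; cbn [fst snd]; repeat split; try lia; lra.
Qed.

Lemma arm_interior_segment_across_edge q k a t v :
  (1 <= q)%nat -> (1 <= k)%nat -> 0 < fst v -> 0 < snd v ->
  arm_s q (k - 1) <= fst a -> fst (pt_add a t v) <= arm_s q (S k) ->
  0 <= snd a -> snd (pt_add a t v) <= arm_l q (S k) ->
  forall c, 0 < c < t -> arm_interior q (pt_add a c v).
Proof.
  unfold pt_add; cbn [fst snd]; intros hq hk hx hy hx0 hx1 hy0 hy1 c hc.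
  pose proof (arm_l_succ_le q k hq) as hl.
  assert (hxc : 0 < c * fst v < t * fst v) by (split; nra).
  assert (hyc : 0 < c * snd v < t * snd v) by (split; nra).
  destruct (Rtotal_order (fst a + c * fst v) (arm_s q k)) as [hlt|[heq|hgt]].
  - left; exists k; cbn [fst snd]; repeat split; try lia; lra.
  - right; exists k; cbn [fst snd]; repeat split; try lia; lra.
  - left; exists (S k); cbn [fst snd]; rewrite Nat.sub_succ, Nat.sub_0_r.
    simpl arm_s in *; repeat split; try lia; lra.
Qed.

Lemma arm_glued_top q k p p' :
  (1 <= k)%nat -> arm_s q (k - 1) < fst p < arm_s q k ->
  snd p = arm_l q k -> p' = (fst p, 0) -> arm_glued q p p'.
Proof. intros; left; left; exists k; auto. Qed.

Lemma arm_glued_side q k p p' :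
  (1 <= k)%nat -> fst p = arm_s q k ->
  arm_l q (S k) < snd p < arm_l q k -> p' = (0, snd p) -> arm_glued q p p'.
Proof. intros; left; right; exists k; auto. Qed.

Section GeometricArmadilloTail.

Variable q : nat.
Hypothesis hq : (2 <= q)%nat.

Let Q := INR q.
Let u := / Q.
Let w := / (2 * Q - 1).
Let v : pt := (2 * Q - 1, Q).

Lemma Q_ge_2 : 2 <= Q.
Proof. apply (le_INR 2); exact hq. Qed.

Ltac rat_ineq :=
  pose proof Q_ge_2; unfold u, w;
  match goal with
  | |- ?a < ?b => enough (0 < b - a) by lra
  | |- ?a <= ?b => enough (0 <= b - a) by lra
  end;
  field_simplify; try lra;
  unfold Rdiv; first
  [ apply Rmult_lt_0_compat; [nra | apply Rinv_0_lt_compat; nra]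
  | apply Rmult_le_pos; [nra | apply Rlt_le, Rinv_0_lt_compat; nra] ].

Ltac rat_eq := pose proof Q_ge_2; unfold u, w; field; lra.

Lemma arm_s_1 : arm_s q 1 = 1.
Proof. unfold arm_s, arm_l; simpl; ring. Qed.
Lemma arm_s_2 : arm_s q 2 = 1 + u.
Proof. unfold arm_s, arm_l; simpl; fold Q u; ring. Qed.
Lemma arm_s_3 : arm_s q 3 = 1 + u + u * u.
Proof. unfold arm_s, arm_l; simpl; fold Q u; ring. Qed.
Lemma arm_l_1 : arm_l q 1 = 1.
Proof. reflexivity. Qed.
Lemma arm_l_2 : arm_l q 2 = u.
Proof. unfold arm_l; simpl; fold Q u; ring. Qed.
Lemma arm_l_3 : arm_l q 3 = u * u.
Proof. unfold arm_l; simpl; fold Q u; ring. Qed.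
Lemma arm_l_4 : arm_l q 4 = u * u * u.
Proof. unfold arm_l; simpl; fold Q u; ring. Qed.

Ltac arm_values :=
  rewrite ?arm_s_1, ?arm_s_2, ?arm_s_3, ?arm_l_1, ?arm_l_2, ?arm_l_3, ?arm_l_4;
  cbn [arm_s].

Lemma direction_pos : 0 < fst v /\ 0 < snd v.
Proof. pose proof Q_ge_2; cbn [v fst snd]; lra. Qed.

Definition round_start (M : R) (s : nat) : pt :=
  match s with
  | O => (0, M * u * w)
  | 1%nat => (0, (Q * Q + M) * u * w)
  | 2%nat => (1 - u - M * u * u, 0)
  | _ => (1 + (Q - 1 - M) * u * u, 0)
  end.

Definition round_len (M : R) (s : nat) : R :=
  match s with
  | O => w
  | 1%nat => (Q * Q - Q - M) * u * u * w
  | 2%nat => u * u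
  | _ => (M + 1) * u * u * w
  end.

Definition round_end (M : R) (s : nat) : pt :=
  match s with
  | O => (1, (Q * Q + M) * u * w)
  | 1%nat => (1 - u - M * u * u, 1)
  | 2%nat => (1 + (Q - 1 - M) * u * u, u)
  | _ => (1 + u, (M + 1) * u * w)
  end.

Lemma round_end_spec M s :
  pt_add (round_start M s) (round_len M s) v = round_end M s.
Proof.
  unfold pt_add, v.
  destruct s as [|[|[|s]]]; cbn [round_start round_len round_end fst snd];
    f_equal; rat_eq.
Qed.

Section Round.

Variable M : R.
Hypothesis hM : 1 <= M <= Q - 1.

Lemma round_len_pos s : 0 < round_len M s.
Proof. destruct s as [|[|[|s]]]; cbn [round_len]; rat_ineq. Qed.

Ltac segment_bounds :=
  rewrite ?round_end_spec; cbn [round_start round_end fst snd Nat.sub];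
  arm_values; try lia; try lra; rat_ineq.

Lemma round_segment s c :
  0 < c < round_len M s -> arm_interior q (pt_add (round_start M s) c v).
Proof.
  destruct direction_pos as [hvx hvy].
  destruct s as [|[|[|s]]].
  - apply (arm_interior_segment_in_square q 1); segment_bounds.
  - apply (arm_interior_segment_in_square q 1); segment_bounds.
  - apply (arm_interior_segment_across_edge q 1); segment_bounds.
  - apply (arm_interior_segment_in_square q 2); segment_bounds.
Qed.

Lemma round_glued s :
  (s < 3)%nat -> (s = 2%nat -> M < Q - 1) ->
  arm_glued q (round_end M s) (round_start M (S s)).
Proof.
  intros hs h2; destruct s as [|[|[|s]]]; try lia.
  - apply (arm_glued_side q 1); cbn [round_end round_start fst snd];
      arm_values; try lia; try reflexivity; split; rat_ineq.
  - apply (arm_glued_top q 1); cbn [round_end round_start fst snd Nat.sub];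
      arm_values; try lia; try reflexivity; split; rat_ineq.
  - specialize (h2 eq_refl).
    apply (arm_glued_top q 2); cbn [round_end round_start fst snd Nat.sub];
      arm_values; try lia; try reflexivity; split; rat_ineq.
Qed.

Lemma round_glued_next :
  arm_glued q (round_end M 3) (round_start (M + 1) 0).
Proof.
  apply (arm_glued_side q 2); cbn [round_end round_start fst snd];
    arm_values; try lia; try reflexivity; split; rat_ineq.
Qed.

End Round.

Lemma last_round_end_vertex : arm_vertex q (round_end (Q - 1) 2).
Proof.
  right; right; exists 1%nat; split; [lia|]; right; right.
  rewrite arm_s_1, arm_l_2; cbn [round_end]; f_equal; ring.
Qed.

Lemma first_segment c :
  0 < c < u * u * w -> arm_interior q (pt_add (1 + u, 0) c v).
Proof.
  destruct direction_pos as [hvx hvy].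
  apply (arm_interior_segment_in_square q 3); unfold pt_add, v;
    cbn [fst snd Nat.sub]; arm_values; try lia; try lra; rat_ineq.
Qed.

Lemma first_glued :
  arm_glued q (pt_add (1 + u, 0) (u * u * w) v) (round_start 1 0).
Proof.
  apply (arm_glued_side q 3); unfold pt_add, v; cbn [round_start fst snd];
    arm_values; try lia.
  - rat_eq.
  - split; rat_ineq.
  - f_equal; rat_eq.
Qed.

(* Piece 0 is the first piece; piece 1 + 4 (M - 1) + s is piece s of round M. *)
Definition piece_start (i : nat) : pt :=
  match i with
  | O => (1 + u, 0)
  | S j => round_start (INR (S (j / 4))) (j mod 4)
  end.

Definition piece_len (i : nat) : R :=
  match i with
  | O => u * u * w
  | S j => round_len (INR (S (j / 4))) (j mod 4)
  end.

Lemma piece_round k s : (s < 4)%nat ->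
  piece_start (S (4 * k + s)) = round_start (INR (S k)) s /\
  piece_len (S (4 * k + s)) = round_len (INR (S k)) s.
Proof.
  intros hs; cbn [piece_start piece_len].
  replace ((4 * k + s) / 4)%nat with k by (apply (Nat.div_unique _ _ _ s); lia).
  replace ((4 * k + s) mod 4)%nat with s by (apply (Nat.mod_unique _ _ k); lia).
  split; reflexivity.
Qed.

Lemma div_mod_4_cases j : exists k s, (s < 4)%nat /\ j = (4 * k + s)%nat.
Proof.
  exists (j / 4)%nat, (j mod 4)%nat.
  pose proof (Nat.div_mod_eq j 4); pose proof (Nat.mod_upper_bound j 4); lia.
Qed.

Lemma round_index_bounds k : (S k < q)%nat -> 1 <= INR (S k) <= Q - 1.
Proof.
  intros hk; assert (INR (S (S k)) <= Q) by (apply le_INR; lia).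
  rewrite !S_INR in *; pose proof (pos_INR k); lra.
Qed.

Lemma round_index_lt k : (S (S k) < q)%nat -> INR (S k) < Q - 1.
Proof.
  intros hk; assert (INR (S (S (S k))) <= Q) by (apply le_INR; lia).
  rewrite !S_INR in *; lra.
Qed.

Lemma piece_segment i : (i <= 4 * q - 5)%nat ->
  0 < piece_len i /\
  forall c, 0 < c < piece_len i -> arm_interior q (pt_add (piece_start i) c v).
Proof.
  destruct i as [|j]; intros hi.
  - cbn [piece_len piece_start]; split; [rat_ineq | exact first_segment].
  - destruct (div_mod_4_cases j) as (k & s & hs & ->).
    destruct (piece_round k s hs) as [-> ->].
    pose proof (round_index_bounds k ltac:(lia)) as hM.
    split; [exact (round_len_pos _ hM s) | exact (round_segment _ hM s)].
Qed.

Lemma piece_glued i : (i < 4 * q - 5)%nat ->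
  arm_glued q (pt_add (piece_start i) (piece_len i) v) (piece_start (S i)).
Proof.
  destruct i as [|j]; intros hi.
  - replace (piece_start 1) with (round_start 1 0) by reflexivity.
    exact first_glued.
  - destruct (div_mod_4_cases j) as (k & s & hs & ->).
    destruct (piece_round k s hs) as [-> ->]; rewrite round_end_spec.
    pose proof (round_index_bounds k ltac:(lia)) as hM.
    destruct (Nat.lt_ge_cases s 3) as [hs3|hs3].
    + replace (S (S (4 * k + s))) with (S (4 * k + S s)) by lia.
      rewrite (proj1 (piece_round k (S s) ltac:(lia))).
      apply (round_glued _ hM s hs3); intros ->; apply round_index_lt; lia.
    + replace s with 3%nat by lia.
      replace (S (S (4 * k + 3))) with (S (4 * S k + 0)) by lia.
      rewrite (proj1 (piece_round (S k) 0 ltac:(lia))), (S_INR (S k)).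
      exact (round_glued_next _ hM).
Qed.

Lemma last_piece_vertex :
  arm_vertex q (pt_add (piece_start (4 * q - 5)) (piece_len (4 * q - 5)) v).
Proof.
  replace (4 * q - 5)%nat with (S (4 * (q - 2) + 2)) by lia.
  destruct (piece_round (q - 2) 2 ltac:(lia)) as [-> ->]; rewrite round_end_spec.
  replace (INR (S (q - 2))) with (Q - 1)
    by (rewrite S_INR, minus_INR by lia; unfold Q; simpl; ring).
  exact last_round_end_vertex.
Qed.

End GeometricArmadilloTail.

Theorem lemma3p1 (q : nat) (hq : (2 <= q)%nat) :
  arm_saddle_connection_from q (1 + / INR q, 0) (2 * INR q - 1, INR q).
Proof.
  split.
  - right; right; exists 2%nat; split; [lia|]; left.
    rewrite (arm_s_2 q); reflexivity.
  - exists (4 * q - 5)%nat, (piece_start q), (piece_len q).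
    split; [reflexivity|].
    split; [|split].
    + exact (piece_segment q hq).
    + exact (piece_glued q hq).
    + exact (last_piece_vertex q hq).
Qed.
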